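(* Let $A(t)=\sum_{n\ge1}|\mathbf{I}_n(201,210)|\,t^n$. Then $A$ satisfies $$(2t^2-2t+1)A^2+(4t^2-3t)A+2t^2=0,$$ and $$A(t)=\frac{3t-4t^2-t\sqrt{1-8t}}{4t^2-4t+2}.$$
   Context: $\mathbf{I}_n=\{(e_1,\dots,e_n)\in\mathbb{N}^n:0\le e_i<i\}$. $\mathbf{I}_n(201,210)$ is the set of $e\in\mathbf{I}_n$ with no indices $i<j<k$ such that $e_j<e_k<e_i$ and no indices $i<j<k$ such that $e_i>e_j>e_k$. *)

From mathcomp Require Import all_boot all_order all_algebra.
Set Implicit Arguments. Unset Strict Implicit. Unset Printing Implicit Defensive.
Import GRing.Theory Num.Theory.
Local Open Scope ring_scope.

(* Inversion sequences of length n, 0-indexed: position i (0 <= i < n)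
   corresponds to e_{i+1}, and the condition 0 <= e_{i+1} < i+1 is e i <= i.
   We represent e as an n-tuple with entries in 'I_n (every admissible entry
   is < n). *)
Definition is_invseq (n : nat) (e : n.-tuple 'I_n) : bool :=
  [forall i : 'I_n, (tnth e i <= i)%N].

Definition avoids_201_210 (n : nat) (e : n.-tuple 'I_n) : bool :=
  [forall i : 'I_n, forall j : 'I_n, forall k : 'I_n,
     ((i < j)%N && (j < k)%N) ==>
     ~~ (((tnth e j < tnth e k)%N && (tnth e k < tnth e i)%N)
         || ((tnth e j < tnth e i)%N && (tnth e k < tnth e j)%N))].

Definition numI (n : nat) : nat :=
  #|[pred e : n.-tuple 'I_n | is_invseq e && avoids_201_210 e]|.

Definition fps := nat -> rat.
Definition fmul (f g : fps) : fps := fun n => \sum_(i < n.+1) f i * g (n - i)%N.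
Definition fadd (f g : fps) : fps := fun n => f n + g n.
Definition fpoly (s : seq rat) : fps := fun n => nth 0 s n.

Definition Aser : fps := fun n => if n == 0%N then 0 else (numI n)%:R.

Definition gbinom (a : rat) (k : nat) : rat :=
  (\prod_(i < k) (a - i%:R)) / (k`!)%:R.

(* sqrt(1 - 8t) = sum_k binom(1/2, k) (-8)^k t^k  (the branch with constant term 1) *)
Definition sqrt_1m8t : fps := fun k => gbinom (1 / 2) k * (-8) ^+ k.

(* Inversion sequences avoiding 201 and 210 grow by appending one
   entry at a time, and a prefix s only matters through its label (a, d): a is
   the number of values below max s that can be appended without creating a
   pattern, and d = |s| - max s.  Appending a low value gives the label
   (1, d+1), appending max s gives (a, d+1), and appending max s + j + 1 gives
   (a+j+1, d-j).  Let C_{a,d}(t) count the extensions of a prefix labelled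
   (a, d), P = C_{0,1} and Q = C_{1,1} - C_{0,1}.  Then C_{a,d} is affine in a
   and C_{a,d+1} = C_{a,d} + t C_{a,d} P + (C_{a,d} - 1) Q; the succession rule
   at (0,1) and (1,1) gives two polynomial equations in P and Q, and
   eliminating Q gives the quadratic for A = t P.  The coefficients of
   s = sqrt(1 - 8t) satisfy (1 - 8t) s' = -4 s, whence s^2 = 1 - 8t; the
   quadratic then factors as (W - t s)(W + t s) = 0 with
   W = 2 (2t^2 - 2t + 1) A + 4t^2 - 3t, and the constant term of (W - t s)/t is nonzero. *)

From mathcomp Require Import all_boot all_order all_algebra.
From Stdlib Require Import FunctionalExtensionality Ring.
(* Stdlib's [ring], used for the ring of power series declared below; the
   [ring] imported on the next line is MathComp's, used on [rat]. *)
Ltac fps_ring := ring.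
From mathcomp Require Import zify ring.
Import GRing.Theory Num.Theory.
Local Open Scope ring_scope.

(** * Formal power series *)

Definition fzero : fps := fun _ => 0.
Definition fone : fps := fun n => if n == 0%N then 1 else 0.
Definition fopp (f : fps) : fps := fun n => - f n.
Definition fsub (f g : fps) : fps := fadd f (fopp g).
Definition fX : fps := fun n => if n == 1%N then 1 else 0.

Declare Scope fps_scope.
Delimit Scope fps_scope with F.
Notation "f + g" := (fadd f g) : fps_scope.
Notation "f - g" := (fsub f g) : fps_scope.
Notation "f * g" := (fmul f g) : fps_scope.
Notation "- f" := (fopp f) : fps_scope.
Notation "0" := fzero : fps_scope.
Notation "1" := fone : fps_scope.
Notation "2" := (fadd fone fone) : fps_scope.
Notation "'X" := fX : fps_scope.

Lemma fps_ext (f g : fps) : (forall n, f n = g n) -> f = g.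
Proof. exact: functional_extensionality. Qed.

Definition ftrunc (n : nat) (f : fps) : {poly rat} := \poly_(i < n.+1) f i.

Lemma coef_ftrunc n f i : (i <= n)%N -> (ftrunc n f)`_i = f i.
Proof. by move=> le_in; rewrite coef_poly ltnS le_in. Qed.

Lemma fmul_coefM (f g : fps) n (p q : {poly rat}) :
  (forall i, (i <= n)%N -> p`_i = f i) -> (forall i, (i <= n)%N -> q`_i = g i) ->
  fmul f g n = (p * q)`_n.
Proof.
move=> pf qg; rewrite coefM /fmul; apply: eq_bigr => i _.
by rewrite pf ?qg // ?leq_subr // -ltnS.
Qed.

Lemma fmul_ftrunc f g n : fmul f g n = (ftrunc n f * ftrunc n g)`_n.
Proof. by apply: fmul_coefM => i; apply: coef_ftrunc. Qed.

Lemma fmulC f g : (f * g = g * f)%F.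
Proof. by apply: fps_ext => n; rewrite !fmul_ftrunc mulrC. Qed.

Lemma fmulA f g h : (f * (g * h) = f * g * h)%F.
Proof.
apply: fps_ext => n.
have trM u v i : (i <= n)%N -> (ftrunc n u * ftrunc n v)`_i = fmul u v i.
  move=> le_in; apply/esym/fmul_coefM => j le_ji; apply: coef_ftrunc;
  exact: leq_trans le_ji le_in.
rewrite (@fmul_coefM _ _ n (ftrunc n f) (ftrunc n g * ftrunc n h)) ?mulrA.
- by apply/esym/fmul_coefM => i; [exact: trM | exact: coef_ftrunc].
- exact: coef_ftrunc.
- exact: trM.
Qed.

Lemma fmulDl f g h : ((f + g) * h = f * h + g * h)%F.
Proof.
apply: fps_ext => n; rewrite /fmul /fadd -big_split.
by apply: eq_bigr => i _; rewrite mulrDl.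
Qed.

Lemma fmul1l f : (1 * f = f)%F.
Proof.
apply: fps_ext => n; rewrite /fmul big_ord_recl /fone /= mul1r subn0.
by rewrite big1 ?addr0 // => i _; rewrite mul0r.
Qed.

Lemma fps_ring_theory : ring_theory fzero fone fadd fmul fsub fopp (@eq fps).
Proof.
split.
- by move=> f; apply: fps_ext => n; rewrite /fadd add0r.
- by move=> f g; apply: fps_ext => n; rewrite /fadd addrC.
- by move=> f g h; apply: fps_ext => n; rewrite /fadd addrA.
- exact: fmul1l.
- exact: fmulC.
- exact: fmulA.
- exact: fmulDl.
- by [].
- by move=> f; apply: fps_ext => n; rewrite /fadd /fopp subrr.
Qed.

Add Ring fps_ring : fps_ring_theory.

Lemma coef_fmulX f n : ('X * f)%F n = if n is n'.+1 then f n' else 0.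
Proof.
rewrite /fmul big_ord_recl /fX /= mul0r add0r; case: n => [|n]; first by rewrite big_ord0.
rewrite big_ord_recl /= subn1 mul1r big1 ?addr0 // => i _.
by rewrite /bump /= mul0r.
Qed.

Lemma fmul_coef0 f g : (f * g)%F 0%N = f 0%N * g 0%N.
Proof. by rewrite /fmul big_ord_recl big_ord0 addr0. Qed.

Lemma fmulX_inj f g : ('X * f = 'X * g)%F -> f = g.
Proof.
by move=> eq_tfg; apply: fps_ext => n; have := congr1 (@^~ n.+1) eq_tfg; rewrite !coef_fmulX.
Qed.

Lemma fmul_eq0_coef0 u f : u 0%N != 0 -> (u * f = 0)%F -> f = 0%F.
Proof.
move=> u0 uf0; apply: fps_ext => n; elim/ltn_ind: n => n IH.
have := congr1 (@^~ n) uf0; rewrite /fmul big_ord_recl subn0 big1 ?addr0.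
  by move/eqP; rewrite mulf_eq0 (negPf u0) => /eqP.
by move=> i _; rewrite IH ?mulr0 //; change (n - i.+1 < n)%N; have := ltn_ord i; lia.
Qed.

Lemma coef_fmulX_fmul f g k :
  ('X * (f * g))%F k = \sum_(p < k) f p * g (k.-1 - p)%N.
Proof. by rewrite coef_fmulX; case: k => [|k]; rewrite ?big_ord0. Qed.

Lemma coef_fsub1_fmul f g k : f 0%N = 1 ->
  ((f - 1) * g)%F k = \sum_(p < k) f p.+1 * g (k.-1 - p)%N.
Proof.
move=> f0; rewrite /fmul big_ord_recl /fsub /fadd /fopp /fone /= f0 subrr mul0r add0r.
by apply: eq_bigr => i _; rewrite subr0 /bump leq0n add1n; congr (_ * g _); lia.
Qed.

Lemma fps_eq_1X f g : f 0%N = 1 -> (forall k, f k.+1 = g k) -> (f = 1 + 'X * g)%F.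
Proof.
by move=> f0 fS; apply: fps_ext => -[|k]; rewrite /fadd coef_fmulX /fone /= ?addr0 ?add0r.
Qed.

(** * The generating tree *)

(* [ext_count k a d] is the number of ways to append [k] entries to a prefix
   with label (a, d) (see [succession_rule] below). *)
Fixpoint ext_count (k a d : nat) : nat :=
  if k is k'.+1 then
    (a * ext_count k' 1 d.+1 + ext_count k' a d.+1
     + \sum_(j < d) ext_count k' (a + j.+1) (d - j))%N
  else 1%N.

Section InversionSequences.

Local Open Scope nat_scope.

Definition pattern_201_210 (x y z : nat) : bool :=
  ((y < z) && (z < x)) || ((y < x) && (z < y)).

Definition invseqb (s : seq nat) : bool :=
  all (fun i => nth 0 s i <= i) (iota 0 (size s)).

Definition avoidsb (s : seq nat) : bool :=
  all (fun i => all (fun j => all (fun k =>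
     (i < j) && (j < k) ==> ~~ pattern_201_210 (nth 0 s i) (nth 0 s j) (nth 0 s k))
     (iota 0 (size s))) (iota 0 (size s))) (iota 0 (size s)).

Definition goodseq (s : seq nat) := invseqb s && avoidsb s.

(* Appending [w] to a sequence avoiding 201 and 210 keeps it avoiding them iff
   every pair i < j with [w < s_i] and [s_j < s_i] has [s_j = w]. *)
Definition appendable (s : seq nat) (w : nat) : bool :=
  all (fun i => all (fun j =>
     [&& i < j, w < nth 0 s i & nth 0 s j < nth 0 s i] ==> (nth 0 s j == w))
     (iota 0 (size s))) (iota 0 (size s)).

Definition seqmax (s : seq nat) := foldr maxn 0 s.

(* Every value >= [seqmax s] is appendable; [low_slots] counts the others. *)
Definition low_slots (s : seq nat) := count (appendable s) (iota 0 (seqmax s)).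

Lemma all_iotaP (P : pred nat) n : reflect (forall i, i < n -> P i) (all P (iota 0 n)).
Proof.
apply: (iffP allP) => H i; first by move=> lt_in; apply: H; rewrite mem_iota.
by rewrite mem_iota => /andP[_]; apply: H.
Qed.

Lemma invseqbP s : reflect (forall i, i < size s -> nth 0 s i <= i) (invseqb s).
Proof. exact: all_iotaP. Qed.

Lemma avoidsbP s : reflect (forall i j k, i < j -> j < k -> k < size s ->
    ~~ pattern_201_210 (nth 0 s i) (nth 0 s j) (nth 0 s k)) (avoidsb s).
Proof.
apply: (iffP (all_iotaP _ _)) => H.
  move=> i j k lt_ij lt_jk lt_ks.
  move: (H i (ltn_trans lt_ij (ltn_trans lt_jk lt_ks))).
  move=> /all_iotaP /(_ j (ltn_trans lt_jk lt_ks)) /all_iotaP /(_ k lt_ks).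
  by rewrite lt_ij lt_jk.
move=> i _; apply/all_iotaP => j _; apply/all_iotaP => k lt_ks.
by apply/implyP => /andP[lt_ij lt_jk]; apply: H.
Qed.

Lemma appendableP s w : reflect (forall i j, i < j -> j < size s -> w < nth 0 s i ->
    nth 0 s j < nth 0 s i -> nth 0 s j = w) (appendable s w).
Proof.
apply: (iffP (all_iotaP _ _)) => H.
  move=> i j lt_ij lt_js lt_w lt_ji.
  move: (H i (ltn_trans lt_ij lt_js)) => /all_iotaP /(_ j lt_js).
  by rewrite lt_ij lt_w lt_ji => /eqP.
move=> i _; apply/all_iotaP => j lt_js.
by apply/implyP => /and3P[lt_ij lt_w lt_ji]; apply/eqP; exact: (H i j).
Qed.

Lemma seqmax_rcons s x : seqmax (rcons s x) = maxn (seqmax s) x.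
Proof. by elim: s => [|y s IH] /=; rewrite ?max0n ?maxn0 // IH maxnA. Qed.

Lemma nth_le_seqmax s i : nth 0 s i <= seqmax s.
Proof.
elim: s i => [|y s IH] [|i] //=; first exact: leq_maxl.
exact: leq_trans (IH i) (leq_maxr _ _).
Qed.

Lemma seqmax_attained s : 0 < seqmax s -> exists2 i, i < size s & nth 0 s i = seqmax s.
Proof.
elim: s => [|y s IH] //= max_gt0.
case: (leqP (seqmax s) y) => [le_my|lt_ym]; first by exists 0 => //; apply/esym/maxn_idPl.
have [i lt_is <-] := IH (leq_ltn_trans (leq0n y) lt_ym).
by exists i.+1 => //; apply/esym/maxn_idPr/ltnW.
Qed.

Lemma appendable_ge_max s w : seqmax s <= w -> appendable s w.
Proof.
move=> le_mw; apply/appendableP => i j _ _ lt_w _.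
by have := nth_le_seqmax s i; lia.
Qed.

Lemma appendable_rcons s v w :
  appendable (rcons s v) w = appendable s w && [|| v == w, seqmax s <= v | seqmax s <= w].
Proof.
apply/idP/andP.
  move/appendableP => H; split.
    apply/appendableP => i j lt_ij lt_js.
    have := H i j lt_ij; rewrite size_rcons !nth_rcons lt_js (ltn_trans lt_ij lt_js).
    by apply; apply: ltnW.
  case: (leqP (seqmax s) v) => [_|lt_vm]; first by rewrite orbT.
  case: (leqP (seqmax s) w) => [_|lt_wm]; first by rewrite !orbT.
  have [i lt_is max_i] := @seqmax_attained s (leq_ltn_trans (leq0n _) lt_vm).
  have := H i (size s) lt_is; rewrite size_rcons ltnSn !nth_rcons lt_is ltnn eqxx max_i.
  by move=> /(_ erefl lt_wm lt_vm) ->; rewrite eqxx.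
move=> [/appendableP H vw]; apply/appendableP => i j lt_ij.
rewrite size_rcons ltnS leq_eqVlt => /orP[/eqP eq_js|lt_js].
  have lt_is : i < size s by rewrite -eq_js.
  rewrite !nth_rcons lt_is eq_js ltnn eqxx => lt_w lt_vi.
  by have := nth_le_seqmax s i; move: vw; lia.
by rewrite !nth_rcons lt_js (ltn_trans lt_ij lt_js); apply: H.
Qed.

Lemma invseqb_rcons s x : invseqb (rcons s x) = invseqb s && (x <= size s).
Proof.
apply/invseqbP/andP => [H|[/invseqbP H le_xs] i].
  split; last by have := H (size s); rewrite size_rcons nth_rcons ltnn eqxx; apply.
  by apply/invseqbP => i lt_is; have := H i; rewrite size_rcons nth_rcons lt_is; apply; lia.
rewrite size_rcons nth_rcons ltnS leq_eqVlt => /orP[/eqP ->|lt_is].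
  by rewrite ltnn eqxx.
by rewrite lt_is; apply: H.
Qed.

Lemma avoidsb_rcons s x : avoidsb (rcons s x) = avoidsb s && appendable s x.
Proof.
apply/avoidsbP/andP => [H|[/avoidsbP H /appendableP Happ] i j k lt_ij lt_jk].
  split.
    apply/avoidsbP => i j k lt_ij lt_jk lt_ks; have := H i j k lt_ij lt_jk.
    rewrite size_rcons !nth_rcons lt_ks (ltn_trans lt_jk lt_ks).
    by rewrite (ltn_trans lt_ij (ltn_trans lt_jk lt_ks)); apply; lia.
  apply/appendableP => i j lt_ij lt_js lt_x lt_ji.
  have := H i j (size s) lt_ij lt_js; rewrite size_rcons ltnSn !nth_rcons.
  rewrite lt_js (ltn_trans lt_ij lt_js) ltnn eqxx => /(_ erefl).
  by rewrite /pattern_201_210; move: lt_x lt_ji; lia.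
rewrite size_rcons ltnS leq_eqVlt => /orP[/eqP eq_ks|lt_ks].
  have lt_js : j < size s by rewrite -eq_ks.
  rewrite !nth_rcons eq_ks ltnn eqxx lt_js (ltn_trans lt_ij lt_js) /pattern_201_210.
  by have := Happ i j lt_ij lt_js; lia.
rewrite !nth_rcons lt_ks (ltn_trans lt_jk lt_ks) (ltn_trans lt_ij (ltn_trans lt_jk lt_ks)).
exact: H.
Qed.

Lemma goodseq_rcons s x :
  goodseq (rcons s x) = [&& goodseq s, x <= size s & appendable s x].
Proof.
rewrite /goodseq invseqb_rcons avoidsb_rcons.
by case: (invseqb s); case: (avoidsb s); case: (x <= size s).
Qed.

Fixpoint count_ext (B : nat) (P : pred (seq nat)) (k : nat) (s : seq nat) : nat :=
  if k is k'.+1 then \sum_(x < B) count_ext B P k' (rcons s x) else P s.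

Lemma sum_tuple_cons (T : finType) k (F : k.+1.-tuple T -> nat) :
  \sum_(t : k.+1.-tuple T) F t = \sum_(x : T) \sum_(t : k.-tuple T) F [tuple of x :: t].
Proof.
rewrite pair_bigA (reindex (fun p : T * k.-tuple T => [tuple of p.1 :: p.2])) //=.
exists (fun t => (thead t, [tuple of behead t])) => [[x t]|t] _ /=.
  by congr (_, _); apply: val_inj.
by rewrite -tuple_eta.
Qed.

Lemma card_count_ext B P k s :
  #|[pred e : k.-tuple 'I_B | P (s ++ map val e)]| = count_ext B P k s.
Proof.
elim: k s => [|k IH] s.
  rewrite -sum1_card big_mkcond (eq_bigr (fun _ => P s : nat)).
    by rewrite sum_nat_const card_tuple mul1n.
  by move=> t _; rewrite (tuple0 t) inE /= cats0; case: (P s).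
rewrite -sum1_card big_mkcond sum_tuple_cons /=; apply: eq_bigr => x _.
by rewrite -IH -sum1_card [RHS]big_mkcond; apply: eq_bigr => t _; rewrite !inE cat_rcons.
Qed.

Lemma count_ext_bad B k s : ~~ goodseq s -> count_ext B goodseq k s = 0.
Proof.
elim: k s => [|k IH] s bad_s /=; first by rewrite (negPf bad_s).
by rewrite big1 // => x _; apply: IH; rewrite goodseq_rcons negb_and bad_s.
Qed.

Lemma low_slots_rcons_lt s x : appendable s x -> x < seqmax s -> low_slots (rcons s x) = 1.
Proof.
move=> app_x lt_xm; rewrite /low_slots seqmax_rcons (maxn_idPl (ltnW lt_xm)).
rewrite (@eq_in_count _ _ (pred1 x)); last first.
  move=> w; rewrite mem_iota add0n => /andP[_ lt_wm] /=.
  rewrite appendable_rcons leqNgt lt_xm leqNgt lt_wm /= orbF.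
  by case: (eqVneq w x) => [->|]; rewrite ?app_x ?andbF.
by rewrite count_uniq_mem ?iota_uniq // mem_iota add0n lt_xm.
Qed.

Lemma low_slots_rcons_max s : low_slots (rcons s (seqmax s)) = low_slots s.
Proof.
rewrite /low_slots seqmax_rcons maxnn; apply: eq_count => w.
by rewrite appendable_rcons leqnn orbT andbT.
Qed.

Lemma low_slots_rcons_gt s j : low_slots (rcons s (seqmax s + j.+1)) = low_slots s + j.+1.
Proof.
rewrite /low_slots seqmax_rcons (maxn_idPr (leq_addr _ _)).
rewrite (@eq_count _ _ (appendable s)); last first.
  by move=> w; rewrite appendable_rcons leq_addr orbT andbT.
rewrite iotaD count_cat add0n; congr (_ + _).
rewrite (@eq_in_count _ _ predT) ?count_predT ?size_iota // => w.
by rewrite mem_iota => /andP[le_mw _]; rewrite appendable_ge_max.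
Qed.

Lemma seqmax_lt_size s : invseqb s -> s != [::] -> seqmax s < size s.
Proof.
move=> /invseqbP inv_s s_neq0; case: (posnP (seqmax s)) => [->|max_gt0].
  by rewrite lt0n size_eq0.
have [i lt_is <-] := @seqmax_attained s max_gt0.
exact: leq_ltn_trans (inv_s i lt_is) lt_is.
Qed.

Lemma succession_rule (F : nat -> nat -> nat) s : invseqb s -> s != [::] ->
  let a := low_slots s in let d := size s - seqmax s in
  \sum_(0 <= x < (size s).+1 | appendable s x)
     F (low_slots (rcons s x)) (size (rcons s x) - seqmax (rcons s x))
  = a * F 1 d.+1 + F a d.+1 + \sum_(j < d) F (a + j.+1) (d - j).
Proof.
move=> inv_s s_neq0 a d; have lt_ms := @seqmax_lt_size s inv_s s_neq0.
rewrite (@big_cat_nat _ _ _ (seqmax s)) //=; last by lia.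
rewrite (@big_cat_nat _ _ _ (seqmax s).+1 (seqmax s)) //=; last by lia.
rewrite [X in _ + (X + _)]big_mkcond big_nat1 appendable_ge_max // low_slots_rcons_max.
rewrite addnA; congr (_ + _ + _).
- rewrite -big_filter (eq_big_seq (fun=> F 1 d.+1)); last first.
    move=> x; rewrite mem_filter mem_index_iota => /andP[app_x /andP[_ lt_xm]].
    rewrite low_slots_rcons_lt // size_rcons seqmax_rcons (maxn_idPl (ltnW lt_xm)).
    by rewrite /d subSn // ltnW.
  by rewrite big_filter -[F 1 d.+1]mul1n -big_distrl sum1_count /index_iota subn0 mul1n.
- by rewrite size_rcons seqmax_rcons maxnn subSn // ltnW.
rewrite -{1}[(seqmax s).+1]add0n big_addn subSS -/d big_mkord.
rewrite [LHS](eq_bigl xpredT) => [|j]; last by apply: appendable_ge_max; lia.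
apply: eq_bigr => j _; rewrite -addSnnS addnC low_slots_rcons_gt.
by rewrite size_rcons seqmax_rcons (maxn_idPr (leq_addr _ _)) /d; congr F; lia.
Qed.

Lemma count_ext_good n k s : goodseq s -> s != [::] -> size s + k <= n ->
  count_ext n goodseq k s = ext_count k (low_slots s) (size s - seqmax s).
Proof.
elim: k s => [|k IH] s good_s s_neq0 le_n; first by rewrite /= good_s.
have inv_s : invseqb s by case/andP: good_s.
rewrite [RHS]/= -(@succession_rule (ext_count k) s inv_s s_neq0).
rewrite [LHS]/= -(big_mkord xpredT (fun x => count_ext n goodseq k (rcons s x))).
rewrite (@big_cat_nat _ _ _ (size s).+1) /= ?[RHS]big_mkcond; [|lia|lia].
rewrite [X in _ + X]big1_seq ?addn0 => [|x]; last first.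
  move=> /andP[_]; rewrite mem_index_iota => /andP[lt_sx _]; apply: count_ext_bad.
  by rewrite goodseq_rcons leqNgt lt_sx andbF.
apply: eq_big_nat => x /andP[_ le_xs]; case: ifP => [app_x|not_app].
  apply: IH; first by rewrite goodseq_rcons good_s app_x -ltnS le_xs.
    by case: (s).
  by rewrite size_rcons; lia.
by apply: count_ext_bad; rewrite goodseq_rcons not_app !andbF.
Qed.

Lemma nth_map_val n (e : n.-tuple 'I_n) (i : 'I_n) : nth 0 (map val e) i = tnth e i.
Proof. by rewrite (nth_map i) ?size_tuple // (tnth_nth i). Qed.

Lemma is_invseqE n (e : n.-tuple 'I_n) : is_invseq e = invseqb (map val e).
Proof.
apply/forallP/invseqbP => [H i|H i]; last by rewrite -nth_map_val H ?size_map ?size_tuple.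
by rewrite size_map size_tuple => lt_in; rewrite (nth_map_val _ e (Ordinal lt_in)) H.
Qed.

Lemma avoids_201_210E n (e : n.-tuple 'I_n) : avoids_201_210 e = avoidsb (map val e).
Proof.
apply/forallP/avoidsbP => [H i j k lt_ij lt_jk|H i].
  rewrite size_map size_tuple => lt_kn.
  have lt_jn : j < n by lia.
  have lt_in : i < n by lia.
  rewrite (nth_map_val _ e (Ordinal lt_in)) (nth_map_val _ e (Ordinal lt_jn)).
  rewrite (nth_map_val _ e (Ordinal lt_kn)).
  move: (H (Ordinal lt_in)) => /forallP /(_ (Ordinal lt_jn)) /forallP /(_ (Ordinal lt_kn)).
  by rewrite /= lt_ij lt_jk.
apply/forallP => j; apply/forallP => k; apply/implyP => /andP[lt_ij lt_jk].
by have := H i j k lt_ij lt_jk; rewrite size_map size_tuple ltn_ord !nth_map_val; apply.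
Qed.

Lemma numI_ext_count k : numI k.+1 = ext_count k 0 1.
Proof.
rewrite /numI (eq_card (B := [pred e : k.+1.-tuple 'I_k.+1 | goodseq ([::] ++ map val e)])).
  rewrite card_count_ext /= big_ord_recl big1 => [|x _]; last first.
    by apply: count_ext_bad.
  by rewrite (count_ext_good k.+1 k [:: 0]) ?addn0.
by move=> e; rewrite !inE /goodseq is_invseqE avoids_201_210E.
Qed.

End InversionSequences.

(** * Generating functions along the tree *)

Definition tree_step (f : nat -> nat -> rat) (a d : nat) : rat :=
  a%:R * f 1%N d.+1 + f a d.+1 + \sum_(j < d) f (a + j.+1)%N (d - j)%N.

Definition ecount k a d : rat := (ext_count k a d)%:R.

Lemma ecountS k a d : ecount k.+1 a d = tree_step (ecount k) a d.
Proof. by rewrite /ecount /tree_step /= !natrD natrM natr_sum. Qed.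

Lemma eq_tree_step f g a d :
  (forall a d, f a d = g a d) -> tree_step f a d = tree_step g a d.
Proof. by move=> fg; rewrite /tree_step !fg; congr (_ + _); apply: eq_bigr => j _. Qed.

Lemma tree_stepD f g a d :
  tree_step (fun a d => f a d + g a d) a d = tree_step f a d + tree_step g a d.
Proof. rewrite /tree_step big_split /=; ring. Qed.

Lemma tree_stepMr f c a d : tree_step (fun a d => f a d * c) a d = tree_step f a d * c.
Proof. rewrite /tree_step -mulr_suml; ring. Qed.

Lemma tree_step_sum k (F : nat -> nat -> nat -> rat) a d :
  tree_step (fun a d => \sum_(p < k) F p a d) a d = \sum_(p < k) tree_step (F p) a d.
Proof.
elim: k => [|k IH].
  by rewrite /tree_step !big_ord0 big1 ?mulr0 ?addr0 // => j _; rewrite big_ord0.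
rewrite big_ord_recr /= -IH -tree_stepD; apply: eq_tree_step => a' d'.
by rewrite big_ord_recr.
Qed.

Lemma tree_step_shift f a d :
  tree_step f a d.+1 = tree_step (fun a d => f a d.+1) a d + f (a + d.+1)%N 1%N.
Proof.
rewrite /tree_step big_ord_recr /= subSnn -!addrA; do 2 congr (_ + _).
by congr (_ + _); apply: eq_bigr => j _; rewrite subSn // ltnW.
Qed.

Lemma ecount_affine k a d :
  ecount k a d = ecount k 0 d + a%:R * (ecount k 1 d - ecount k 0 d).
Proof.
elim: k a d => [|k IH] a d; first by rewrite /ecount subrr mulr0 addr0.
have sumE b : \sum_(j < d) ecount k (b + j.+1) (d - j) =
    \sum_(j < d) ecount k 0 (d - j)
    + b%:R * \sum_(j < d) (ecount k 1 (d - j) - ecount k 0 (d - j))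
    + \sum_(j < d) (j.+1)%:R * (ecount k 1 (d - j) - ecount k 0 (d - j)).
  rewrite mulr_sumr -!big_split /=; apply: eq_bigr => j _.
  by rewrite {}IH natrD; ring.
by rewrite !ecountS /tree_step !sumE (IH a) {IH}; ring.
Qed.

Definition Cser (a d : nat) : fps := fun k => ecount k a d.
Definition Pser : fps := Cser 0 1.
Definition Qser : fps := (Cser 1 1 - Cser 0 1)%F.

Lemma Pser0 : Pser 0%N = 1.
Proof. by []. Qed.

(* The coefficient of [t C P + (C - 1) Q] in [Cser_shift]. *)
Definition shift_corr k a d :=
  \sum_(p < k) (ecount p a d * Pser (k.-1 - p)%N + ecount p.+1 a d * Qser (k.-1 - p)%N).

Lemma ecount1 a d : ecount 1 a d = (a + d.+1)%:R.
Proof.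
rewrite ecountS /tree_step /ecount /= (eq_bigr (fun _ => 1)) // sumr_const card_ord.
by rewrite !natrD mulr1 -[d%:R]mulr1n; ring.
Qed.

Lemma shift_corrS k a d :
  shift_corr k.+1 a d = ecount k (a + d.+1) 1 + tree_step (shift_corr k) a d.
Proof.
pose F p a d := ecount p a d * Pser (k.-1 - p)%N + ecount p.+1 a d * Qser (k.-1 - p)%N.
rewrite /shift_corr big_ord_recl /= subn0 ecount1 (tree_step_sum k F).
rewrite (ecount_affine k (a + d.+1)) mul1r; congr (_ + _); apply: eq_bigr => p _.
have -> : (k - bump 0 p = k.-1 - p)%N by rewrite /bump leq0n add1n; lia.
by rewrite /F tree_stepD !tree_stepMr -!ecountS.
Qed.

Lemma ecount_shift k a d : ecount k a d.+1 = ecount k a d + shift_corr k a d.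
Proof.
elim: k a d => [|k IH] a d; first by rewrite /shift_corr big_ord0 addr0.
by rewrite !ecountS tree_step_shift (eq_tree_step _ _ _ _ IH) {IH} tree_stepD shift_corrS; ring.
Qed.

Lemma Cser_shift a d :
  (Cser a d.+1 = Cser a d + 'X * Cser a d * Pser + (Cser a d - 1) * Qser)%F.
Proof.
apply: fps_ext => k; rewrite /fadd -fmulA coef_fmulX_fmul coef_fsub1_fmul //.
by rewrite /Cser ecount_shift /shift_corr big_split addrA.
Qed.

Lemma Pser_eq :
  (Pser = 1 + 'X * (2 * Pser + Qser + 'X * Pser * Pser + (Pser - 1) * Qser))%F.
Proof.
have rec : (Pser = 1 + 'X * (Cser 0 2 + Cser 1 1))%F.
  apply: fps_eq_1X => // k.
  by rewrite /Pser /Cser ecountS /tree_step big_ord1 /fadd /=; ring.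
rewrite {1}rec Cser_shift /Qser -/Pser; fps_ring.
Qed.

Lemma Cser11_eq (C := Cser 1 1) :
  (C = 1 + 'X * (2 * C + 2 * ('X * C * Pser + (C - 1) * Qser) + Pser + 2 * Qser))%F.
Proof.
have rec : (C = 1 + 'X * (2 * Cser 1 2 + Cser 2 1))%F.
  apply: fps_eq_1X => // k.
  by rewrite fmulDl fmul1l /C /Cser ecountS /tree_step big_ord1 /fadd /=; ring.
have C21 : (Cser 2 1 = Pser + 2 * Qser)%F.
  apply: fps_ext => k; rewrite fmulDl fmul1l /Cser ecount_affine.
  rewrite /Pser /Qser /Cser /fadd /fsub /fopp /fadd; ring.
rewrite {1}rec Cser_shift C21 -/C; fps_ring.
Qed.

(** * The quadratic equation *)

Definition Dser : fps := (1 - 2 * 'X + 2 * ('X * 'X))%F.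

Lemma Aser_eq : Aser = ('X * Pser)%F.
Proof.
apply: fps_ext => -[|n]; rewrite /Aser coef_fmulX //=.
by rewrite numI_ext_count.
Qed.

Lemma Aser_quadratic (A := Aser) :
  (Dser * (A * A) + (2 * 2 * ('X * 'X) - (2 + 1) * 'X) * A + 2 * ('X * 'X) = 0)%F.
Proof.
pose C := Cser 1 1.
pose E0 := (Pser - (1 + 'X * (2 * Pser + Qser + 'X * Pser * Pser + (Pser - 1) * Qser)))%F.
pose E1 := (C - (1 + 'X * (2 * C + 2 * ('X * C * Pser + (C - 1) * Qser) + Pser + 2 * Qser)))%F.
have E0_eq0 : E0 = 0%F by rewrite /E0 {1}Pser_eq; fps_ring.
have E1_eq0 : E1 = 0%F by rewrite /E1 /C {1}Cser11_eq; fps_ring.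
rewrite /A Aser_eq; apply: (@fmul_eq0_coef0 (1 + 'X * Pser)%F).
  by rewrite /fadd coef_fmulX /fone /=.
(* (1 + A) times the quadratic is a combination of E0 and E1. *)
transitivity (0 - 'X * Pser * ('X * Pser) * 'X * (E1 - E0)
   + ('X * Pser * ('X * Pser) + 2 * ('X * Pser) * ('X * Qser)) * 'X * E0
   + 'X * E0 * (2 * ('X * Pser - 'X - 'X * ('X * Pser)) - 'X * Pser))%F.
  by rewrite /Dser /E0 /E1 /C /Qser -/Pser; fps_ring.
by rewrite E0_eq0 E1_eq0; fps_ring.
Qed.

(** * The closed form *)

Section SqrtSeries.

Local Notation s := sqrt_1m8t.

Lemma gbinomS a k : gbinom a k.+1 = gbinom a k * (a - k%:R) / k.+1%:R.
Proof.
have fact_neq0 : (k`!)%:R != 0 :> rat by rewrite pnatr_eq0 -lt0n fact_gt0.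
rewrite /gbinom big_ord_recr factS natrM /=; field.
by rewrite fact_neq0 andbT addrC natr1 pnatr_eq0.
Qed.

Lemma sqrt_1m8t0 : s 0%N = 1.
Proof. by rewrite /sqrt_1m8t /gbinom big_ord0 expr0 divr1 mulr1. Qed.

(* That is, (1 - 8t) s' = -4 s; squaring gives (1 - 8t) (s^2)' = -8 s^2. *)
Lemma sqrt_1m8tS k : k.+1%:R * s k.+1 = (8 * k%:R - 4) * s k.
Proof.
rewrite /sqrt_1m8t gbinomS exprS; field.
by rewrite addrC natr1 pnatr_eq0.
Qed.

Definition weighted_conv m := \sum_(i < m.+1) i%:R * s i * s (m - i)%N.

Lemma weighted_convE m : 2 * weighted_conv m = m%:R * (s * s)%F m.
Proof.
have rev : weighted_conv m = \sum_(i < m.+1) (m - i)%:R * s i * s (m - i)%N.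
  rewrite /weighted_conv (reindex_inj rev_ord_inj) /=; apply: eq_bigr => i _.
  by rewrite subSS (@subKn i m (ltn_ord i)) mulrAC.
rewrite mulr_natl mulr2n {2}rev -big_split /fmul mulr_sumr; apply: eq_bigr => i _ /=.
by rewrite -!mulrDl -natrD (@subnKC i m (ltn_ord i)) mulrA.
Qed.

Lemma weighted_convS m : weighted_conv m.+1 = 8 * weighted_conv m - 4 * (s * s)%F m.
Proof.
rewrite /weighted_conv big_ord_recl !mul0r add0r /fmul !mulr_sumr -sumrB.
by apply: eq_bigr => i _; rewrite lift0 subSS sqrt_1m8tS; ring.
Qed.

Lemma sqr_sqrt_1m8tS m : m.+1%:R * (s * s)%F m.+1 = (8 * m%:R - 8) * (s * s)%F m.
Proof.
rewrite -weighted_convE weighted_convS mulrBr mulrA (mulrC 2 8) -mulrA weighted_convE.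
ring.
Qed.

Lemma sqr_sqrt_1m8t : (s * s = 1 - 2 * 2 * 2 * 'X)%F.
Proof.
have sq0 : (s * s)%F 0%N = 1 by rewrite fmul_coef0 sqrt_1m8t0 mulr1.
have sq1 : (s * s)%F 1%N = -8.
  by have := sqr_sqrt_1m8tS 0; rewrite sq0 mul1r mulr0 add0r mulr1.
have sqSS m : (s * s)%F m.+2 = 0.
  have mulSn_eq0 n (x : rat) : n.+1%:R * x = 0 -> x = 0.
    by move/eqP; rewrite mulf_eq0 pnatr_eq0 => /eqP.
  elim: m => [|m IH]; [apply: (mulSn_eq0 1%N) | apply: (mulSn_eq0 m.+2)].
    by rewrite sqr_sqrt_1m8tS sq1 mulr1 subrr mul0r.
  by rewrite sqr_sqrt_1m8tS IH mulr0.
apply: fps_ext => -[|[|m]]; rewrite ?sq0 ?sq1 ?sqSS -!fmulA !fmulDl !fmul1l.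
all: by rewrite /fsub /fadd /fopp /fX /fone /=; ring.
Qed.

End SqrtSeries.

Lemma Aser_closed_form :
  (2 * Dser * Aser = (2 + 1) * 'X - 2 * 2 * ('X * 'X) + - 'X * sqrt_1m8t)%F.
Proof.
pose W := (2 * Dser * Aser + (2 * 2 * ('X * 'X) - (2 + 1) * 'X))%F.
pose V := (2 * Dser * Pser + (2 * 2 * 'X - (2 + 1)) - sqrt_1m8t)%F.
have W_sq : ((W - 'X * sqrt_1m8t) * (W + 'X * sqrt_1m8t) = 0)%F.
  transitivity (2 * 2 * Dser * (Dser * (Aser * Aser)
      + (2 * 2 * ('X * 'X) - (2 + 1) * 'X) * Aser + 2 * ('X * 'X))
    + 'X * 'X * ((1 - 2 * 2 * 2 * 'X) - sqrt_1m8t * sqrt_1m8t))%F.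
    by rewrite /W /Dser; fps_ring.
  by rewrite Aser_quadratic sqr_sqrt_1m8t; fps_ring.
have W_fac : (W - 'X * sqrt_1m8t = 'X * V)%F by rewrite /W /V Aser_eq; fps_ring.
(* This selects the branch of the square root. *)
have V0 : V 0%N = -2.
  by rewrite /V /Dser /fsub /fadd /fopp !fmul_coef0 /fone /fX /= sqrt_1m8t0 Pser0; ring.
have W_eq0 : (W + 'X * sqrt_1m8t = 0)%F.
  apply: (@fmul_eq0_coef0 V); first by rewrite V0 oppr_eq0.
  by apply: fmulX_inj; rewrite fmulA -W_fac W_sq; fps_ring.
transitivity (2 * Dser * Aser - (W + 'X * sqrt_1m8t))%F; first by rewrite W_eq0; fps_ring.
by rewrite /W; fps_ring.
Qed.

Ltac fpoly_coefs := apply: fps_ext => -[|[|[|n]]];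
  rewrite -?fmulA ?fmulDl ?fmul1l /fsub /fadd /fopp ?coef_fmulX /fX /fone /fpoly /= ?nth_nil;
  ring.

Lemma fpoly_Dser : fpoly [:: 1; -2; 2] = Dser.
Proof. rewrite /Dser; fpoly_coefs. Qed.

Lemma fpoly_4t2m3t : fpoly [:: 0; -3; 4] = (2 * 2 * ('X * 'X) - (2 + 1) * 'X)%F.
Proof. fpoly_coefs. Qed.

Lemma fpoly_2t2 : fpoly [:: 0; 0; 2] = (2 * ('X * 'X))%F.
Proof. fpoly_coefs. Qed.

Lemma fpoly_2Dser : fpoly [:: 2; -4; 4] = (2 * Dser)%F.
Proof. rewrite /Dser; fpoly_coefs. Qed.

Lemma fpoly_3tm4t2 : fpoly [:: 0; 3; -4] = ((2 + 1) * 'X - 2 * 2 * ('X * 'X))%F.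
Proof. fpoly_coefs. Qed.

Lemma fpoly_mt : fpoly [:: 0; -1] = (- 'X)%F.
Proof. fpoly_coefs. Qed.

Theorem theorem4p7 :
  (forall n : nat,
     fadd (fadd (fmul (fpoly [:: 1; -2; 2]) (fmul Aser Aser))
                (fmul (fpoly [:: 0; -3; 4]) Aser))
          (fpoly [:: 0; 0; 2]) n = 0)
  /\
  (forall n : nat,
     fmul (fpoly [:: 2; -4; 4]) Aser n
     = fadd (fpoly [:: 0; 3; -4]) (fmul (fpoly [:: 0; -1]) sqrt_1m8t) n).
Proof.
split=> n.
  by rewrite fpoly_Dser fpoly_4t2m3t fpoly_2t2 Aser_quadratic.
by rewrite fpoly_2Dser fpoly_3tm4t2 fpoly_mt Aser_closed_form.
Qed.
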